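(* For every integer $i\ge 5$, $\overline{\alpha}(\{1,5,2i\})=\frac{i}{2i+5}$.
   Context: For a finite set $S$ of positive integers, the distance graph $G(S)$ has vertex set $\mathbb{Z}$, with $i,j$ adjacent iff $|i-j|\in S$. The density of $A\subseteq\mathbb{Z}$ is $\delta(A)=\limsup_{N\to\infty}\frac{|A\cap[-N,N]|}{2N+1}$, and the independence ratio $\overline{\alpha}(S)$ is the supremum of $\delta(A)$ over independent sets $A$ of $G(S)$. *)

From Stdlib Require Import Reals ZArith List ClassicalDescription.
From Coquelicot Require Import Coquelicot.
Open Scope R_scope.

Definition independent (S : list Z) (A : Z -> Prop) : Prop :=
  forall x y : Z, A x -> A y -> ~ In (Z.abs (x - y)) S.

Definition indic (A : Z -> Prop) (z : Z) : R :=
  if excluded_middle_informative (A z) then 1 else 0.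

(* |A ∩ [-N, N]|  (sum over k = 0..2N of indic A (k - N)) *)
Definition count_sym (A : Z -> Prop) (N : nat) : R :=
  sum_f_R0 (fun k => indic A (Z.of_nat k - Z.of_nat N)%Z) (2 * N).

Definition density (A : Z -> Prop) : Rbar :=
  LimSup_seq (fun N => count_sym A N / INR (2 * N + 1)).

Definition indep_ratio (S : list Z) : Rbar :=
  Lub_Rbar (fun d : R => exists A : Z -> Prop,
              independent S A /\ density A = Finite d).

(* An independent set meets each block of 2i+5 consecutive integers in at most i
   points, so its density is at most i/(2i+5); the set of integers whose residue
   mod 2i+5 is one of 0, 2, ..., 2i-2 is independent and meets every such block in
   exactly i points.

   The block bound is a finite-state fact. Scanning a block from left to right, the
   distance-1 and distance-5 constraints only involve the last five positions read,
   and the distance-2i constraint only compares the first five positions with the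
   last five. A max-plus dynamic program over (first five bits, last five bits)
   bounds 2 #ones - length along the scan. Its transition does not depend on i, and
   a table that dominates the states after 10 steps and is stable under two more
   steps (computed and checked by evaluation) gives 2 #ones - (2i+5) <= -4, i.e.
   #ones <= i, for every i >= 5. *)

From Stdlib Require Import Reals ZArith List.
From Coquelicot Require Import Coquelicot.
Open Scope R_scope.
From Stdlib Require Import Bool Arith Lia Lra ClassicalDescription.

Local Open Scope nat_scope.

Fixpoint count_true (b : nat -> bool) (n : nat) : nat :=
  match n with 0 => 0 | S n => count_true b n + Nat.b2n (b n) end.

Lemma count_true_ext (b b' : nat -> bool) (n : nat) :
  (forall k, k < n -> b k = b' k) -> count_true b n = count_true b' n.
Proof.
  induction n as [|n IH]; intros E; [reflexivity|]; cbn.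
  rewrite IH by (intros k Hk; apply E; lia).
  rewrite E by lia; reflexivity.
Qed.

Lemma count_true_add (b : nat -> bool) (m n : nat) :
  count_true b (m + n) = count_true b m + count_true (fun k => b (m + k)) n.
Proof.
  induction n as [|n IH]; cbn [count_true]; [rewrite Nat.add_0_r; lia|].
  rewrite Nat.add_succ_r; cbn [count_true]; rewrite IH; lia.
Qed.

Lemma count_true_le (b : nat -> bool) (n : nat) : count_true b n <= n.
Proof. induction n as [|n IH]; cbn; [lia|]; destruct (b n); cbn; lia. Qed.

Lemma count_true_zero (b : nat -> bool) (n : nat) :
  (forall k, k < n -> b k = false) -> count_true b n = 0.
Proof.
  induction n as [|n IH]; intros Hb; cbn; [reflexivity|].
  rewrite IH by (intros k Hk; apply Hb; lia).
  rewrite Hb by lia; reflexivity.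
Qed.

Lemma count_true_slide (b : nat -> bool) (P : nat) :
  b P = b 0 -> count_true (fun k => b (S k)) P = count_true b P.
Proof.
  intros Hper.
  pose proof (count_true_add b 1 P) as H1; pose proof (count_true_add b P 1) as H2.
  rewrite Nat.add_comm in H2; rewrite H2 in H1; cbn in H1.
  rewrite Nat.add_0_r, Hper in H1; lia.
Qed.

Lemma count_true_tiles_le (b : nat -> bool) (P n q r : nat) :
  (forall s, count_true (fun k => b (s + k)) P <= n) ->
  count_true b (q * P + r) <= q * n + r.
Proof.
  intros Hwin; revert b Hwin; induction q as [|q IH]; intros b Hwin.
  - apply count_true_le.
  - replace (S q * P + r) with (P + (q * P + r)) by lia.
    rewrite count_true_add.
    assert (count_true (fun k => b (P + k)) (q * P + r) <= q * n + r).
    { apply IH; intros s; rewrite (count_true_ext _ (fun k => b (P + s + k)));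
        [apply Hwin | intros; f_equal; lia]. }
    assert (count_true b P <= n) by exact (Hwin 0); lia.
Qed.

Lemma count_true_tiles_ge (b : nat -> bool) (P n q r : nat) :
  (forall s, n <= count_true (fun k => b (s + k)) P) ->
  q * n <= count_true b (q * P + r).
Proof.
  intros Hwin; revert b Hwin; induction q as [|q IH]; intros b Hwin; [lia|].
  replace (S q * P + r) with (P + (q * P + r)) by lia.
  rewrite count_true_add.
  assert (q * n <= count_true (fun k => b (P + k)) (q * P + r)).
  { apply IH; intros s; rewrite (count_true_ext _ (fun k => b (P + s + k)));
      [apply Hwin | intros; f_equal; lia]. }
  assert (n <= count_true b P) by exact (Hwin 0); lia.
Qed.

Lemma count_true_density_le (b : nat -> bool) (P n M : nat) :
  0 < P -> (forall s, count_true (fun k => b (s + k)) P <= n) ->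
  count_true b M * P <= n * M + P * P.
Proof.
  intros HP Hwin.
  pose proof (Nat.div_mod_eq M P) as HM; pose proof (Nat.mod_upper_bound M P ltac:(lia)) as Hr.
  pose proof (count_true_tiles_le b P n (M / P) (M mod P) Hwin) as Htiles.
  rewrite (Nat.mul_comm (M / P) P), <- HM in Htiles.
  set (q := M / P) in *; set (r := M mod P) in *; clearbody q r.
  assert (count_true b M * P <= (q * n + r) * P) by (apply Nat.mul_le_mono_r; exact Htiles).
  assert (n * (P * q) <= n * M) by (apply Nat.mul_le_mono_l; lia).
  assert (r * P <= P * P) by (apply Nat.mul_le_mono_r; lia).
  lia.
Qed.

Lemma count_true_density_ge (b : nat -> bool) (P n M : nat) :
  0 < P -> n <= P -> (forall s, n <= count_true (fun k => b (s + k)) P) ->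
  n * M <= count_true b M * P + P * P.
Proof.
  intros HP HnP Hwin.
  pose proof (Nat.div_mod_eq M P) as HM; pose proof (Nat.mod_upper_bound M P ltac:(lia)) as Hr.
  pose proof (count_true_tiles_ge b P n (M / P) (M mod P) Hwin) as Htiles.
  rewrite (Nat.mul_comm (M / P) P), <- HM in Htiles.
  set (q := M / P) in *; set (r := M mod P) in *; clearbody q r.
  assert (q * n * P <= count_true b M * P) by (apply Nat.mul_le_mono_r; exact Htiles).
  assert (n * r <= P * P) by (apply Nat.mul_le_mono; lia).
  assert (n * M = q * n * P + n * r) by (rewrite HM; ring).
  lia.
Qed.

Lemma count_true_even_prefix (n r : nat) :
  count_true (fun k => Nat.even k && (k <? 2 * n)) (2 * n + r) = n.
Proof.
  rewrite count_true_add, (count_true_zero _ r);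
    [|intros k _; replace (2 * n + k <? 2 * n) with false
        by (symmetry; apply Nat.ltb_ge; lia); apply andb_false_r].
  enough (forall m, m <= n -> count_true (fun k => Nat.even k && (k <? 2 * n)) (2 * m) = m)
    by (rewrite H; lia).
  induction m as [|m IH]; intros Hm; [reflexivity|].
  replace (2 * S m) with (S (S (2 * m))) by lia; cbn [count_true].
  rewrite IH by lia.
  rewrite Nat.even_succ, <- Nat.negb_even, Nat.even_mul; cbn [Nat.even negb andb].
  rewrite (proj2 (Nat.ltb_lt _ _)) by lia; cbn; lia.
Qed.

Definition avoids_1_5 (b : nat -> bool) (n : nat) : Prop :=
  forall x d, (d = 1 \/ d = 5) -> x + d < n -> b x = true -> b (x + d) = false.

Lemma avoids_1_5_le (b : nat -> bool) (m n : nat) : m <= n -> avoids_1_5 b n -> avoids_1_5 b m.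
Proof. intros Hmn Havoid x d Hd Hx; apply Havoid; lia. Qed.

Definition next_code (L : nat) (c : bool) : nat := L / 2 + 16 * Nat.b2n c.

(* A one may follow the window [L] unless it would be at distance 1 (bit 4) or
   distance 5 (bit 0) from a one of [L]. *)
Definition admissible (L : nat) (c : bool) : bool :=
  negb (c && (Nat.testbit L 0 || Nat.testbit L 4)).

Definition window_code (b : nat -> bool) (y : nat) : nat :=
  Nat.b2n (b y) + 2 * Nat.b2n (b (y + 1)) + 4 * Nat.b2n (b (y + 2))
  + 8 * Nat.b2n (b (y + 3)) + 16 * Nat.b2n (b (y + 4)).

Lemma window_code_succ (b : nat -> bool) (y : nat) :
  window_code b (S y) = next_code (window_code b y) (b (y + 5)).
Proof.
  unfold window_code, next_code.
  replace (S y) with (y + 1) by lia.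
  rewrite <- !Nat.add_assoc; cbn [Nat.add].
  destruct (b y), (b (y + 1)), (b (y + 2)), (b (y + 3)), (b (y + 4)), (b (y + 5));
    reflexivity.
Qed.

Lemma window_code_bit (b : nat -> bool) (y j : nat) :
  j < 5 -> Nat.testbit (window_code b y) j = b (y + j).
Proof.
  intros Hj; unfold window_code.
  assert (j = 0 \/ j = 1 \/ j = 2 \/ j = 3 \/ j = 4) as [->|[->|[->|[->| ->]]]] by lia;
    rewrite ?Nat.add_0_r;
    destruct (b y), (b (y + 1)), (b (y + 2)), (b (y + 3)), (b (y + 4)); reflexivity.
Qed.

Lemma window_code_lt (b : nat -> bool) (y : nat) : window_code b y < 32.
Proof.
  unfold window_code.
  destruct (b y), (b (y + 1)), (b (y + 2)), (b (y + 3)), (b (y + 4)); cbn; lia.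
Qed.

Lemma admissible_window_code (b : nat -> bool) (m : nat) :
  avoids_1_5 b (m + 6) -> admissible (window_code b m) (b (m + 5)) = true.
Proof.
  intros Havoid; unfold admissible; rewrite !window_code_bit by lia.
  destruct (b (m + 5)) eqn:E; [|reflexivity].
  assert (Hfar : b m = false).
  { destruct (b m) eqn:Em; [|reflexivity].
    rewrite (Havoid m 5) in E by (assumption || lia); discriminate. }
  assert (Hnear : b (m + 4) = false).
  { destruct (b (m + 4)) eqn:Em; [|reflexivity].
    replace (m + 5) with (m + 4 + 1) in E by lia.
    rewrite (Havoid (m + 4) 1) in E by (assumption || lia); discriminate. }
  rewrite Nat.add_0_r, Hfar, Hnear; reflexivity.
Qed.

Definition weight (F : nat) : nat := count_true (Nat.testbit F) 5.

Lemma weight_window_code (b : nat -> bool) : weight (window_code b 0) = count_true b 5.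
Proof. apply count_true_ext; intros k Hk; apply window_code_bit, Hk. Qed.

Definition table := list Z.

(* Plays the role of -oo: soundness does not depend on its value, it only has to
   be small enough for [window_certificate] to succeed. *)
Definition unreachable : Z := (-64)%Z.

Definition entry (V : table) (L : nat) : Z := nth L V unreachable.

Definition gain (c : bool) : Z := if c then 1%Z else (-1)%Z.

Definition candidate (V : table) (L : nat) (c : bool) : Z :=
  if admissible L c then (entry V L + gain c)%Z else unreachable.

(* The codes [L] with [next_code L c = L'] are [2 (L' mod 16)] and its successor,
   [c] being the top bit of [L']. *)
Definition relax (V : table) : table :=
  map (fun L' => let c := 16 <=? L' in
                 Z.max (candidate V (2 * (L' mod 16)) c) (candidate V (2 * (L' mod 16) + 1) c))
      (seq 0 32).

Definition start_table (F : nat) : table :=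
  map (fun L => if L =? F then (2 * Z.of_nat (weight F) - 5)%Z else unreachable) (seq 0 32).

Definition reach (F m : nat) : table := Nat.iter m relax (start_table F).

Lemma entry_seq32 (f : nat -> Z) (L : nat) :
  L < 32 -> entry (map f (seq 0 32)) L = f L.
Proof.
  intros HL; unfold entry.
  rewrite (nth_indep _ _ (f 0)) by (rewrite length_map, length_seq; exact HL).
  rewrite map_nth, seq_nth by exact HL; reflexivity.
Qed.

Lemma next_code_lt (L : nat) (c : bool) : L < 32 -> next_code L c < 32.
Proof.
  intros HL; unfold next_code.
  assert (L / 2 < 16) by (apply Nat.Div0.div_lt_upper_bound; lia).
  destruct c; simpl Nat.b2n; lia.
Qed.

Lemma relax_spec (V : table) (L : nat) (c : bool) :
  L < 32 -> admissible L c = true ->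
  (entry V L + gain c <= entry (relax V) (next_code L c))%Z.
Proof.
  intros HL Hadm; unfold relax; rewrite entry_seq32 by (apply next_code_lt, HL).
  assert (Hhalf : L / 2 < 16) by (apply Nat.Div0.div_lt_upper_bound; lia).
  assert (Hc : (16 <=? next_code L c) = c)
    by (unfold next_code; destruct c; simpl Nat.b2n;
        [apply Nat.leb_le | apply Nat.leb_gt]; lia).
  assert (Hmod : next_code L c mod 16 = L / 2).
  { symmetry; apply (Nat.mod_unique _ _ (Nat.b2n c)); [lia|]; unfold next_code; lia. }
  rewrite Hc, Hmod.
  assert (Hcand : candidate V L c = (entry V L + gain c)%Z)
    by (unfold candidate; rewrite Hadm; reflexivity).
  pose proof (Nat.div_mod_eq L 2); pose proof (Nat.mod_upper_bound L 2 ltac:(lia)).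
  assert (L = 2 * (L / 2) \/ L = 2 * (L / 2) + 1) as [E|E] by lia;
    rewrite <- E; lia.
Qed.

Definition table_below (V W : table) : Prop :=
  forall L, L < 32 -> (entry V L <= entry W L)%Z.

Lemma relax_mono (V W : table) : table_below V W -> table_below (relax V) (relax W).
Proof.
  intros HVW L' HL'; unfold relax; rewrite !entry_seq32 by exact HL'.
  assert (L' mod 16 < 16) by (apply Nat.mod_upper_bound; lia).
  assert (Hcand : forall L c, L < 32 -> (candidate V L c <= candidate W L c)%Z).
  { intros L c HL; unfold candidate; destruct (admissible L c); [|lia].
    specialize (HVW L HL); lia. }
  cbv zeta; apply Z.max_le_compat; apply Hcand; lia.
Qed.

Lemma reach_bound (b : nat -> bool) (m : nat) :
  avoids_1_5 b (5 + m) ->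
  (2 * Z.of_nat (count_true b (5 + m)) - Z.of_nat (5 + m)
     <= entry (reach (window_code b 0) m) (window_code b m))%Z.
Proof.
  induction m as [|m IH]; intros Havoid.
  - unfold reach; change (Nat.iter 0 relax ?V) with V; unfold start_table.
    rewrite entry_seq32 by apply window_code_lt.
    rewrite Nat.eqb_refl, weight_window_code, Nat.add_0_r; lia.
  - specialize (IH (avoids_1_5_le b (5 + m) (5 + S m) ltac:(lia) Havoid)).
    unfold reach; rewrite Nat.iter_succ; fold (reach (window_code b 0) m).
    rewrite window_code_succ.
    assert (Hadm : admissible (window_code b m) (b (m + 5)) = true)
      by (apply admissible_window_code, (avoids_1_5_le _ _ (5 + S m)); [lia | exact Havoid]).
    eapply Z.le_trans; [|apply relax_spec; [apply window_code_lt | exact Hadm]].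
    replace (5 + S m) with (S (m + 5)) by lia; cbn [count_true].
    replace (5 + m) with (m + 5) in IH by lia.
    destruct (b (m + 5)); cbn [Nat.b2n gain]; lia.
Qed.

Definition disjoint5 (F L : nat) : bool :=
  forallb (fun j => negb (Nat.testbit F j && Nat.testbit L j)) (seq 0 5).

Definition adjacent_free (F : nat) : bool :=
  forallb (fun j => negb (Nat.testbit F j && Nat.testbit F (S j))) (seq 0 4).

Definition table_le (V W : table) : bool :=
  forallb (fun L => (entry V L <=? entry W L)%Z) (seq 0 32).

Lemma table_le_below (V W : table) : table_le V W = true -> table_below V W.
Proof.
  unfold table_le; rewrite forallb_forall; intros H L HL.
  apply Z.leb_le, H, in_seq; lia.
Qed.

Definition table_max (V W : table) : table :=
  map (fun L => Z.max (entry V L) (entry W L)) (seq 0 32).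

(* Any table above [reach F 10] that is stable under two relaxations bounds every
   [reach F (10 + 2 k)]; the maximum of [reach F 10] and [reach F 12] is one. *)
Definition invariant_table (F : nat) : table := table_max (reach F 10) (reach F 12).

Definition certified (F : nat) : bool :=
  let W := invariant_table F in
  table_le (reach F 10) W && table_le (relax (relax W)) W
  && forallb (fun L => negb (disjoint5 F L) || (entry W L <=? -4)%Z) (seq 0 32).

Lemma window_certificate :
  forallb (fun F => negb (adjacent_free F) || certified F) (seq 0 32) = true.
Proof. vm_compute. reflexivity. Qed.

Lemma certified_of_adjacent_free (F : nat) :
  F < 32 -> adjacent_free F = true -> certified F = true.
Proof.
  intros HF Hadj.
  pose proof (proj1 (forallb_forall _ _) window_certificate F) as C.
  specialize (C (proj2 (in_seq 32 0 F) ltac:(lia))).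
  apply orb_prop in C as [C|C]; [rewrite Hadj in C; discriminate | exact C].
Qed.

Lemma certified_spec (F : nat) : certified F = true ->
  table_below (reach F 10) (invariant_table F) /\
  table_below (relax (relax (invariant_table F))) (invariant_table F) /\
  (forall L, L < 32 -> disjoint5 F L = true -> (entry (invariant_table F) L <= -4)%Z).
Proof.
  unfold certified; cbv zeta; intros Hc.
  apply andb_prop in Hc as [Hc Hend]; apply andb_prop in Hc as [Havoidtart Havoidtep].
  split; [apply table_le_below, Havoidtart|]; split; [apply table_le_below, Havoidtep|].
  intros L HL Hdisj; rewrite forallb_forall in Hend.
  specialize (Hend L (proj2 (in_seq 32 0 L) ltac:(lia))).
  apply orb_prop in Hend as [Hend|Hend]; [rewrite Hdisj in Hend; discriminate|].
  apply Z.leb_le, Hend.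
Qed.

Lemma reach_below_invariant (F k : nat) :
  certified F = true -> table_below (reach F (10 + 2 * k)) (invariant_table F).
Proof.
  intros Hc; destruct (certified_spec F Hc) as [Havoidtart [Havoidtep _]].
  induction k as [|k IH]; [rewrite Nat.mul_0_r, Nat.add_0_r; exact Havoidtart|].
  replace (10 + 2 * S k) with (2 + (10 + 2 * k)) by lia.
  unfold reach; rewrite Nat.iter_add; fold (reach F (10 + 2 * k)).
  rewrite !Nat.iter_succ; change (Nat.iter 0 relax ?V) with V.
  intros L HL; eapply Z.le_trans; [apply (relax_mono _ _ (relax_mono _ _ IH)), HL|].
  apply Havoidtep, HL.
Qed.

Lemma count_true_window_bound (b : nat -> bool) (i : nat) :
  5 <= i -> avoids_1_5 b (2 * i + 5) ->
  (forall j, j < 5 -> b j = true -> b (2 * i + j) = false) ->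
  count_true b (2 * i + 5) <= i.
Proof.
  intros Hi Havoid Hcross.
  set (F := window_code b 0); set (L := window_code b (2 * i)).
  assert (Hadj : adjacent_free F = true).
  { unfold adjacent_free; apply forallb_forall; intros j Hj; apply in_seq in Hj.
    unfold F; rewrite !window_code_bit by lia; cbn [Nat.add].
    destruct (b j) eqn:E; [|reflexivity].
    replace (S j) with (j + 1) by lia.
    rewrite (Havoid j 1) by (assumption || lia); reflexivity. }
  assert (Hdisj : disjoint5 F L = true).
  { unfold disjoint5; apply forallb_forall; intros j Hj; apply in_seq in Hj.
    unfold F, L; rewrite !window_code_bit by lia; cbn [Nat.add].
    destruct (b j) eqn:E; [|reflexivity].
    rewrite Hcross by (assumption || lia); reflexivity. }
  assert (Hcert : certified F = true)
    by (apply certified_of_adjacent_free; [apply window_code_lt | exact Hadj]).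
  pose proof (proj2 (proj2 (certified_spec F Hcert)) L (window_code_lt _ _) Hdisj) as Hfinal.
  pose proof (reach_bound b (2 * i)
                (avoids_1_5_le b (5 + 2 * i) (2 * i + 5) ltac:(lia) Havoid)) as Hreach.
  pose proof (reach_below_invariant F (i - 5) Hcert L (window_code_lt _ _)) as Hbelow.
  replace (10 + 2 * (i - 5)) with (2 * i) in Hbelow by lia.
  replace (5 + 2 * i) with (2 * i + 5) in Hreach by lia.
  fold F L in Hreach; lia.
Qed.

Definition member_bits (A : Z -> Prop) (a : Z) (k : nat) : bool :=
  if excluded_middle_informative (A (a + Z.of_nat k)%Z) then true else false.

Lemma member_bits_true (A : Z -> Prop) (a : Z) (k : nat) :
  member_bits A a k = true <-> A (a + Z.of_nat k)%Z.
Proof. unfold member_bits; destruct excluded_middle_informative; split; easy. Qed.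

Lemma member_bits_shift (A : Z -> Prop) (a : Z) (s k : nat) :
  member_bits A a (s + k) = member_bits A (a + Z.of_nat s) k.
Proof. unfold member_bits; rewrite Nat2Z.inj_add, Z.add_assoc; reflexivity. Qed.

Lemma count_true_member_bits_shift (A : Z -> Prop) (a : Z) (s n : nat) :
  count_true (fun k => member_bits A a (s + k)) n
  = count_true (member_bits A (a + Z.of_nat s)) n.
Proof. apply count_true_ext; intros k _; apply member_bits_shift. Qed.

Lemma count_true_periodic_window (A : Z -> Prop) (P : nat) :
  (forall x, A (x + Z.of_nat P)%Z <-> A x) ->
  forall a, count_true (member_bits A a) P = count_true (member_bits A 0) P.
Proof.
  intros Hper.
  assert (Hslide : forall a,
             count_true (member_bits A (a + 1)) P = count_true (member_bits A a) P).
  { intros a; rewrite <- (count_true_slide (member_bits A a)).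
    - apply count_true_ext; intros k _.
      change (S k) with (1 + k); rewrite member_bits_shift; reflexivity.
    - apply eq_true_iff_eq; rewrite !member_bits_true, Z.add_0_r; apply Hper. }
  apply Z.peano_ind; [reflexivity| |].
  - intros a IH; rewrite <- Z.add_1_r, Hslide; exact IH.
  - intros a IH.
    rewrite <- IH, <- (Hslide (Z.pred a)), Z.add_1_r, Z.succ_pred; reflexivity.
Qed.

Lemma independent_window_bound (n : nat) (A : Z -> Prop) (a : Z) :
  5 <= n -> independent (1%Z :: 5%Z :: (2 * Z.of_nat n)%Z :: nil) A ->
  count_true (member_bits A a) (2 * n + 5) <= n.
Proof.
  intros Hn HA; apply count_true_window_bound; [exact Hn | |].
  - intros x d Hd _ Hx; apply not_true_iff_false; intros Hxd.
    apply member_bits_true in Hx, Hxd; apply (HA _ _ Hxd Hx).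
    replace (Z.abs (a + Z.of_nat (x + d) - (a + Z.of_nat x))) with (Z.of_nat d) by lia.
    destruct Hd as [-> | ->]; cbn; tauto.
  - intros j _ Hj; apply not_true_iff_false; intros Hj'.
    apply member_bits_true in Hj, Hj'; apply (HA _ _ Hj' Hj).
    replace (Z.abs (a + Z.of_nat (2 * n + j) - (a + Z.of_nat j)))
      with (2 * Z.of_nat n)%Z by lia.
    cbn; tauto.
Qed.

Definition extremal_set (n : nat) (x : Z) : Prop :=
  exists m, (0 <= m < Z.of_nat n)%Z /\ (x mod Z.of_nat (2 * n + 5) = 2 * m)%Z.

Lemma extremal_set_periodic (n : nat) (x : Z) :
  extremal_set n (x + Z.of_nat (2 * n + 5)) <-> extremal_set n x.
Proof.
  unfold extremal_set.
  replace ((x + Z.of_nat (2 * n + 5)) mod Z.of_nat (2 * n + 5))%Z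
    with (x mod Z.of_nat (2 * n + 5))%Z; [reflexivity|].
  rewrite <- (Z.mod_add x 1) by lia; f_equal; lia.
Qed.

Lemma extremal_set_independent (n : nat) :
  independent (1%Z :: 5%Z :: (2 * Z.of_nat n)%Z :: nil) (extremal_set n).
Proof.
  intros x y [m1 [Hm1 Ex]] [m2 [Hm2 Ey]] Hdist.
  set (P := Z.of_nat (2 * n + 5)) in *.
  assert (HP : P = (2 * Z.of_nat n + 5)%Z) by (unfold P; lia).
  pose proof (Z.div_mod x P ltac:(lia)) as Dx; pose proof (Z.div_mod y P ltac:(lia)) as Dy.
  set (t := (x / P - y / P)%Z).
  assert (Hxy : (x - y = P * t + 2 * (m1 - m2))%Z) by (unfold t; lia).
  clearbody t; cbn [In] in Hdist.
  assert (t <= -2 \/ t = -1 \/ t = 0 \/ t = 1 \/ 2 <= t)%Z as [Ht|[->|[->|[->|Ht]]]] by lia;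
    [assert (P * t <= P * -2)%Z by (apply Z.mul_le_mono_nonneg_l; lia)
    | | | | assert (P * 2 <= P * t)%Z by (apply Z.mul_le_mono_nonneg_l; lia)];
    lia.
Qed.

Lemma extremal_set_window (n : nat) (a : Z) :
  count_true (member_bits (extremal_set n) a) (2 * n + 5) = n.
Proof.
  rewrite count_true_periodic_window by apply extremal_set_periodic.
  rewrite <- (count_true_even_prefix n 5) at 3.
  apply count_true_ext; intros k Hk.
  apply eq_true_iff_eq; rewrite member_bits_true; unfold extremal_set.
  rewrite Z.add_0_l, Z.mod_small by lia.
  rewrite andb_true_iff, Nat.even_spec, Nat.ltb_lt; split.
  - intros [m [Hm E]]; split; [exists (Z.to_nat m) | ]; lia.
  - intros [[m E] Hlt]; exists (Z.of_nat m); lia.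
Qed.

Lemma indic_member_bits (A : Z -> Prop) (N k : nat) :
  indic A (Z.of_nat k - Z.of_nat N) = INR (Nat.b2n (member_bits A (- Z.of_nat N) k)).
Proof.
  unfold indic, member_bits.
  replace (Z.of_nat k - Z.of_nat N)%Z with (- Z.of_nat N + Z.of_nat k)%Z by lia.
  destruct excluded_middle_informative; reflexivity.
Qed.

Lemma count_sym_count_true (A : Z -> Prop) (N : nat) :
  count_sym A N = INR (count_true (member_bits A (- Z.of_nat N)) (2 * N + 1)).
Proof.
  unfold count_sym; rewrite Nat.add_1_r; induction (2 * N) as [|n IH].
  - cbn [sum_f_R0 count_true]; rewrite indic_member_bits, plus_INR; simpl INR; lra.
  - rewrite tech5, IH, indic_member_bits, <- plus_INR; reflexivity.
Qed.

Local Open Scope R_scope.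

Lemma is_lim_seq_add_div_odd (d c : R) :
  is_lim_seq (fun N => d + c / INR (2 * N + 1)) d.
Proof.
  assert (Hodd : is_lim_seq (fun N => INR (2 * N + 1)) p_infty).
  { apply is_lim_seq_le_p_loc with (u := INR); [|apply is_lim_seq_INR].
    exists 0%nat; intros N _; apply le_INR; lia. }
  pose proof (is_lim_seq_scal_l _ c _ (is_lim_seq_inv _ _ Hodd ltac:(discriminate))) as H.
  pose proof (is_lim_seq_plus' _ _ d _ (is_lim_seq_const d) H) as Havoidum.
  cbn in Havoidum; rewrite Rmult_0_r, Rplus_0_r in Havoidum; exact Havoidum.
Qed.

Lemma ratio_le_of_nat (c n P M : nat) :
  (0 < P)%nat -> (0 < M)%nat -> (c * P <= n * M + P * P)%nat ->
  INR c / INR M <= INR n / INR P + INR P / INR M.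
Proof.
  intros HP HM H; apply le_INR in H; rewrite plus_INR, !mult_INR in H.
  apply lt_0_INR in HP, HM.
  apply (Rmult_le_reg_r (INR P * INR M)); [nra|].
  replace ((INR n / INR P + INR P / INR M) * (INR P * INR M))
    with (INR n * INR M + INR P * INR P) by (field; lra).
  replace (INR c / INR M * (INR P * INR M)) with (INR c * INR P) by (field; lra).
  exact H.
Qed.

Lemma ratio_ge_of_nat (c n P M : nat) :
  (0 < P)%nat -> (0 < M)%nat -> (n * M <= c * P + P * P)%nat ->
  INR n / INR P - INR P / INR M <= INR c / INR M.
Proof.
  intros HP HM H; apply le_INR in H; rewrite plus_INR, !mult_INR in H.
  apply lt_0_INR in HP, HM.
  apply (Rmult_le_reg_r (INR P * INR M)); [nra|].
  replace ((INR n / INR P - INR P / INR M) * (INR P * INR M))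
    with (INR n * INR M - INR P * INR P) by (field; lra).
  replace (INR c / INR M * (INR P * INR M)) with (INR c * INR P) by (field; lra).
  lra.
Qed.

Lemma density_le_of_windows (A : Z -> Prop) (P n : nat) :
  (0 < P)%nat -> (forall a, (count_true (member_bits A a) P <= n)%nat) ->
  Rbar_le (density A) (INR n / INR P).
Proof.
  intros HP Hwin; unfold density.
  set (d := INR n / INR P).
  replace (Finite d) with (LimSup_seq (fun N => d + INR P / INR (2 * N + 1))).
  - apply LimSup_le; exists 0%nat; intros N _.
    rewrite count_sym_count_true; apply ratio_le_of_nat; [exact HP | lia |].
    apply count_true_density_le; [exact HP|].
    intros s; rewrite count_true_member_bits_shift; apply Hwin.
  - apply is_LimSup_seq_unique, is_lim_LimSup_seq, is_lim_seq_add_div_odd.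
Qed.

Lemma density_of_windows (A : Z -> Prop) (P n : nat) :
  (0 < P)%nat -> (forall a, count_true (member_bits A a) P = n) ->
  density A = INR n / INR P.
Proof.
  intros HP Hwin; unfold density.
  set (d := INR n / INR P).
  assert (HnP : (n <= P)%nat) by (rewrite <- (Hwin 0%Z); apply count_true_le).
  apply is_LimSup_seq_unique, is_lim_LimSup_seq.
  apply is_lim_seq_le_le with (u := fun N => d + - INR P / INR (2 * N + 1))
                              (w := fun N => d + INR P / INR (2 * N + 1));
    [|apply is_lim_seq_add_div_odd ..].
  intros N; rewrite count_sym_count_true; split.
    + replace (d + - INR P / INR (2 * N + 1)) with (d - INR P / INR (2 * N + 1))
        by (unfold Rdiv; ring).
      apply ratio_ge_of_nat; [exact HP | lia |].
      apply count_true_density_ge; [exact HP | exact HnP |].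
      intros s; rewrite count_true_member_bits_shift, Hwin; lia.
    + apply ratio_le_of_nat; [exact HP | lia |].
      apply count_true_density_le; [exact HP|].
      intros s; rewrite count_true_member_bits_shift, Hwin; lia.
Qed.

Theorem theorem28 (i : Z) (hi : (5 <= i)%Z) :
  indep_ratio (1%Z :: 5%Z :: (2 * i)%Z :: nil) =
  Finite (IZR i / IZR (2 * i + 5)).
Proof.
  destruct (Z_of_nat_complete i ltac:(lia)) as [n ->].
  replace (IZR (Z.of_nat n) / IZR (2 * Z.of_nat n + 5)) with (INR n / INR (2 * n + 5))
    by (rewrite !INR_IZR_INZ; f_equal; f_equal; lia).
  apply is_lub_Rbar_unique; split.
  - intros d [A [HA Hd]]; rewrite <- Hd.
    apply density_le_of_windows; [lia|].
    intros a; apply independent_window_bound; [lia | exact HA].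
  - intros b Hb; apply Hb; exists (extremal_set n); split.
    + apply extremal_set_independent.
    + apply density_of_windows; [lia | apply extremal_set_window].
Qed.
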